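(* Let $\Omega^*\subset\widehat{\mathbb C}$ be a domain with $\infty\in\Omega^*$ whose complementary components are uniformly fat. Then for each $\varepsilon>0$ there are at most finitely many components $B^*$ of $\widehat{\mathbb C}\setminus\Omega^*$ with $\mathrm{diam}(B^* )>\varepsilon$. In particular, at most countably many components of $\widehat{\mathbb C}\setminus\Omega^*$ are non-degenerate.
   Context: A measurable set $B\subset\mathbb C$ is $c$-fat ($c>0$) if $\mathrm{Area}(B\cap B(z,r))\ge cr^2$ for all $z\in B$ and $0<r\le\mathrm{diam}(B)$; single points are considered $c$-fat for every $c$. A family of sets is uniformly fat if every member is $c$-fat for one common $c>0$. *)

From HB Require Import structures.
From mathcomp Require Import all_boot all_order all_algebra.
From mathcomp Require Import all_classical all_reals all_analysis.
Set Implicit Arguments. Unset Strict Implicit. Unset Printing Implicit Defensive.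
Import Order.TTheory GRing.Theory Num.Theory.
Import numFieldNormedType.Exports.
Local Open Scope classical_set_scope.
Local Open Scope ring_scope.

(* The complex plane C is modelled as R * R (product topology = usual one);
   the Riemann sphere is its one-point compactification, with None = infinity. *)
Notation sphere R := (one_point_compactification (R * R)%type).

Definition edist (R : realType) (z w : R * R) : R :=
  Num.sqrt ((z.1 - w.1) ^+ 2 + (z.2 - w.2) ^+ 2).

Definition edisk (R : realType) (z : R * R) (r : R) : set (R * R) :=
  [set w | edist z w < r].

Definition ediam (R : realType) (B : set (R * R)) : \bar R :=
  ereal_sup [set (edist x y)%:E | x in B & y in B].

Definition area (R : realType) :=
  (@lebesgue_measure R \x @lebesgue_measure R)%E.

(* c-fatness: Area(B ∩ B(z,r)) >= c r^2 for z in B, 0 < r <= diam B.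
   (Single points are vacuously c-fat since their diameter is 0.) *)
Definition fat (R : realType) (c : R) (B : set (R * R)) : Prop :=
  forall z, B z -> forall r : R, 0 < r -> (r%:E <= ediam B)%E ->
    ((c * r ^+ 2)%:E <= @area R (B `&` edisk z r))%E.

Definition compl_components (R : realType) (Om : set (sphere R))
  : set (set (sphere R)) :=
  [set C | exists p, ~ Om p /\ C = connected_component (~` Om) p].

Definition finpart (R : realType) (C : set (sphere R)) : set (R * R) :=
  Some @^-1` C.

From Pilot Require Import Defs.
From HB Require Import structures.
From mathcomp Require Import all_boot all_order all_algebra.
From mathcomp Require Import all_classical all_reals all_analysis.
From mathcomp Require Import finmap lra measurable_realfun.
Set Implicit Arguments.
Unset Strict Implicit.
Unset Printing Implicit Defensive.
Import Order.TTheory GRing.Theory Num.Theory.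
Import numFieldNormedType.Exports.
Local Open Scope classical_set_scope.
Local Open Scope ring_scope.

(* A component B of the complement with diam B > eps contains a point z
   such that B meets the disc B(z, eps) in area at least c eps^2.  These
   pieces are pairwise disjoint, and since Om is a neighbourhood of infinity
   they all lie in one fixed square, so comparing areas bounds their number.
   A non-degenerate component has positive diameter, hence diameter
   > 1/(n+1) for some n, and countability follows. *)

Section packing.
Context d (T : measurableType d) (R : realType).
Context (mu : {measure set T -> \bar R}).
Context (I : choiceType) (D : set I) (F : I -> set T) (A : set T) (k : R).
Hypotheses (k_gt0 : 0 < k) (mA : measurable A) (muA : (mu A < +oo)%E).
Hypotheses (tF : trivIset D F) (mF : forall i, D i -> measurable (F i)).
Hypotheses (FA : forall i, D i -> F i `<=` A)
  (muF : forall i, D i -> (k%:E <= mu (F i))%E).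

Lemma fset_card_mul_le_measure (B : {fset I}) :
  [set` B] `<=` D -> ((#|` B|%:R * k)%:E <= mu A)%E.
Proof.
move=> BD; have mFB i : [set` B] i -> measurable (F i) by move=> /BD /mF.
have sum_k : ((#|` B|%:R * k)%:E = \sum_(i \in [set` B]) k%:E)%E.
  rewrite fsbig_finite ?finite_fset // set_fsetK sumEFin.
  by rewrite big_const_seq count_predT iter_addr_0 mulr_natl.
rewrite sum_k; apply: (@le_trans _ _ (\sum_(i \in [set` B]) mu (F i))%E).
  by apply: lee_fsum (finite_fset B) _ => i /BD /muF.
rewrite -(measure_fin_bigcup _ (finite_fset B)) //; last exact: sub_trivIset tF.
apply: le_measure.
- by apply/mem_set; exact: fin_bigcup_measurable (finite_fset B) mFB.
- exact/mem_set.
- by move=> x [i /BD Di]; apply: FA.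
Qed.

Lemma finite_disjoint_measure_ge : finite_set D.
Proof.
have muA_fin : mu A \is a fin_num by rewrite ge0_fin_numE.
set n := (Num.truncn (fine (mu A) / k)).+1.
apply: contrapT => /(infinite_set_fset n)[B BD Bn].
have := fset_card_mul_le_measure BD.
rewrite -(fineK muA_fin) lee_fin -ler_pdivlMr // => cardB.
have : n%:R <= fine (mu A) / k by apply: le_trans cardB; rewrite ler_nat.
by rewrite leNgt truncnS_gt.
Qed.

End packing.

Section plane.
Variable R : realType.
Implicit Types (z w : R * R) (r : R) (B : set (R * R)).

Lemma ball_prodE z r : ball z r = ball z.1 r `*` ball z.2 r.
Proof. by []. Qed.

Lemma measurable_ball_prod z r : measurable (ball z r).
Proof. by rewrite ball_prodE; apply: measurableX; exact: measurable_ball. Qed.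

Lemma area_ball z r : 0 <= r -> area (ball z r) = ((r *+ 2) ^+ 2)%:E.
Proof.
move=> r_ge0.
rewrite ball_prodE /area product_measure1E; [|exact: measurable_ball..].
change (lebesgue_measure (ball z.1 r) * lebesgue_measure (ball z.2 r) =
        ((r *+ 2) ^+ 2)%:E)%E.
by rewrite !lebesgue_measure_ball // -EFinM expr2.
Qed.

Lemma area_ball_lty z r : 0 <= r -> (area (ball z r) < +oo)%E.
Proof. by move=> r_ge0; rewrite area_ball // ltry. Qed.

Lemma open_measurable_prod (U : set (R * R)) : open U -> measurable U.
Proof.
(* Squares with rational centres and radii form a countable base. *)
pose q2 (q : rat * rat) : R * R := (ratr q.1, ratr q.2).
pose Q := [set q : rat * rat * rat | ball (q2 q.1) (ratr q.2) `<=` U].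
move=> oU; have -> : U = \bigcup_(q in Q) ball (q2 q.1) (ratr q.2).
  apply/seteqP; split => [x Ux|x [q Qq /Qq//]].
  have /nbhs_ballP[e /= e_gt0 xeU] := oU x Ux.
  have [r /andP[r_gt0 r_lt]] : exists r : rat, (0 : R) < ratr r < e / 2.
    have [r] := @rat_in_itvoo R 0 (e / 2) ltac:(lra).
    by rewrite in_itv /=; exists r.
  have [a] := @rat_in_itvoo R (x.1 - ratr r) (x.1 + ratr r) ltac:(lra).
  have [b] := @rat_in_itvoo R (x.2 - ratr r) (x.2 + ratr r) ltac:(lra).
  rewrite !in_itv /= => /andP[b1 b2] /andP[a1 a2].
  have xq : ball (q2 (a, b)) (ratr r) x.
    by split; rewrite /ball /= ltr_distlC; apply/andP; split; lra.
  exists ((a, b), r) => //= y qy; apply: xeU.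
  have := ball_triangle (ball_sym xq) qy.
  by apply: le_ball; lra.
rewrite bigcup_mkcond; apply: countable_bigcupT_measurable => [|q].
  exact: countableP.
by case: ifP => // _; exact: measurable_ball_prod.
Qed.

Lemma dist1_le_edist z w : `|z.1 - w.1| <= Defs.edist z w.
Proof.
by rewrite /Defs.edist -sqrtr_sqr ler_sqrt ?addr_ge0 ?sqr_ge0 // lerDl sqr_ge0.
Qed.

Lemma dist2_le_edist z w : `|z.2 - w.2| <= Defs.edist z w.
Proof.
by rewrite /Defs.edist -sqrtr_sqr ler_sqrt ?addr_ge0 ?sqr_ge0 // lerDr sqr_ge0.
Qed.

Lemma edist_gt0 z w : z != w -> 0 < Defs.edist z w.
Proof.
case: z w => [a1 a2] [b1 b2].
rewrite xpair_eqE negb_and /Defs.edist sqrtr_gt0 /=.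
by case/orP => ?; [rewrite ltr_wpDr | rewrite ltr_wpDl];
  rewrite ?sqr_ge0 // exprn_even_gt0 //= subr_eq0.
Qed.

Lemma edisk_sub_ball z r : edisk z r `<=` ball z r.
Proof.
move=> w zw; rewrite ball_prodE; split; rewrite /ball /=.
- exact: le_lt_trans (dist1_le_edist z w) zw.
- exact: le_lt_trans (dist2_le_edist z w) zw.
Qed.

Lemma measurable_edist z : measurable_fun setT (Defs.edist z).
Proof.
apply: (measurableT_comp (continuous_measurable_fun (@sqrt_continuous R))).
by apply: measurable_funD; apply: measurable_funX; apply: measurable_funB.
Qed.

Lemma measurable_edisk z r : measurable (edisk z r).
Proof.
have := measurable_edist z measurableT (measurable_itv `]-oo, r[).
by rewrite setTI; congr measurable; apply/seteqP; split => w; rewrite /= in_itv.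
Qed.

Lemma edist_le_ediam B z w : B z -> B w -> ((Defs.edist z w)%:E <= ediam B)%E.
Proof. by move=> Bz Bw; apply: ereal_sup_ubound; exists z => //; exists w. Qed.

Lemma ediam_gt_neq0 B (a : \bar R) : (a < ediam B)%E -> B !=set0.
Proof.
apply: contraPP => /set0P/negP/negbNE/eqP ->.
by rewrite /ediam image2E set0X image_set0 ereal_sup0 ltNge leNye.
Qed.

End plane.

Lemma exists_natSinv_lt (R : realType) (x : \bar R) :
  (0 < x)%E -> exists n : nat, ((n.+1%:R^-1)%:E < x)%E.
Proof.
case: x => [r|_|//]; last by exists 0%N; rewrite ltry.
by rewrite lte_fin => /ltr_add_invr[n]; rewrite add0r; exists n.
Qed.

Section complement_components.
Variables (R : realType) (Om : set (sphere R)).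

Lemma compl_components_sub C : compl_components Om C -> C `<=` ~` Om.
Proof. by move=> [p [_ ->]]; exact: connected_component_sub. Qed.

Lemma trivIset_compl_components : trivIset (compl_components Om) (@finpart R).
Proof.
move=> _ _ [p1 [_ ->]] [p2 [_ ->]] [w [p1w p2w]].
by rewrite (same_connected_component p1w) (same_connected_component p2w).
Qed.

Hypothesis oOm : open Om.

Lemma closed_finpart_component C : compl_components Om C -> closed (finpart C).
Proof.
move=> [p [_ ->]]; apply: (@preimage_closed _ (sphere R) Some) => [x _|].
  exact: one_point_compactification_some_continuous.
by apply: component_closed; exact: open_closedC.
Qed.

Lemma measurable_finpart_component C :
  compl_components Om C -> measurable (finpart C).
Proof.
move=> /closed_finpart_component; rewrite -openC => /open_measurable_prod.
by move=> /measurableC; rewrite setCK.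
Qed.

Hypothesis OmN : Om None.

Lemma compl_bounded :
  exists2 M : R, 0 < M & forall w, ~ Om (Some w) -> ball 0 M w.
Proof.
have [W cW OmW] :
    exists2 W : set (R * R), compact W & forall w, ~ Om (Some w) -> W w.
  move: oOm; rewrite openE => /(_ _ OmN)[W [cW _] WOm]; exists W => // w Omw.
  by apply: contrapT => Ww; apply: Omw; apply: WOm; left; exists w.
have [M [M_real WM]] := compact_bounded cW.
have M1 : M < `|M| + 1 by rewrite (le_lt_trans (real_ler_norm M_real)) // ltrDl.
exists (`|M| + 2) => [|w /OmW Ww]; first by rewrite ltr_wpDl.
rewrite -ball_normE /= sub0r normrN.
by apply: le_lt_trans (WM _ M1 w Ww) _; rewrite ltrD2l ltr1n.
Qed.

Lemma ediam_gt0_nondegenerate C : compl_components Om C ->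
  (exists x y, C x /\ C y /\ x <> y) -> (0 < ediam (finpart C))%E.
Proof.
move=> /compl_components_sub COm [x [y [Cx [Cy xy]]]].
case: x Cx xy => [a Ca|/COm//]; case: y Cy => [b Cb|/COm//] ab.
apply: lt_le_trans (edist_le_ediam Ca Cb); rewrite lte_fin edist_gt0 //.
by apply/eqP => a_b; apply: ab; rewrite a_b.
Qed.

Lemma finite_fat_compl_components (c eps : R) : 0 < c -> 0 < eps ->
  (forall C, compl_components Om C -> fat c (finpart C)) ->
  finite_set [set C | compl_components Om C /\ (eps%:E < ediam (finpart C))%E].
Proof.
move=> c_gt0 eps_gt0 fatC; have [M M_gt0 OmM] := compl_bounded.
pose z (C : set (sphere R)) := xget (0, 0) (finpart C).
have finpart_z C : (eps%:E < ediam (finpart C))%E -> finpart C (z C).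
  by move/ediam_gt_neq0 => ?; exact: xgetPex.
apply: (@finite_disjoint_measure_ge _ _ _ (@area R) _ _
  (fun C => finpart C `&` edisk (z C) eps) (ball 0 (M + eps)) (c * eps ^+ 2)).
- by rewrite mulr_gt0 // exprn_gt0.
- exact: measurable_ball_prod.
- by apply: area_ball_lty; rewrite addr_ge0 // ltW.
- apply/trivIset_setIr/sub_trivIset/trivIset_compl_components; by move=> C [].
- move=> C [/measurable_finpart_component mC _].
  by apply: measurableI => //; exact: measurable_edisk.
- move=> C [/compl_components_sub COm /finpart_z zC] w [_ /edisk_sub_ball zw].
  exact: ball_triangle (OmM _ (COm _ zC)) zw.
- by move=> C [cC /[dup] /finpart_z zC /ltW]; exact: fatC.
Qed.

End complement_components.

Theorem lemma4p1 (R : realType) (Om : set (sphere R)) :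
  open Om -> connected Om -> Om None ->
  (exists2 c : R, 0 < c &
     forall C, compl_components Om C -> fat c (finpart C)) ->
  (forall eps : R, 0 < eps ->
     finite_set [set C | compl_components Om C /\
                         (eps%:E < ediam (finpart C))%E]) /\
  countable [set C | compl_components Om C /\
                     exists x y, C x /\ C y /\ x <> y].
Proof.
move=> oOm _ OmN [c c_gt0 fatC].
have finite_big eps : 0 < eps -> finite_set
    [set C | compl_components Om C /\ (eps%:E < ediam (finpart C))%E].
  move=> eps_gt0.
  exact: (finite_fat_compl_components oOm OmN c_gt0 eps_gt0 fatC).
split=> //.
pose big n := [set C | compl_components Om C /\
                       ((n.+1%:R^-1 : R)%:E < ediam (finpart C))%E].
apply: (@sub_countable _ _ _ (\bigcup_(n in [set: nat]) big n)).
  apply: subset_card_le => C [cC /(ediam_gt0_nondegenerate OmN cC)].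
  by move=> /exists_natSinv_lt[n ?]; exists n.
apply: bigcup_countable => // n _; apply/finite_set_countable/finite_big.
by rewrite invr_gt0.
Qed.
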